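(* Let $\mathfrak{g}$ be a complex simple Lie algebra with Cartan subalgebra $\mathfrak{h}$, root system $\Delta$, positive roots $\Delta^+$ and simple roots $\Pi$; let $\Sigma\subset\Pi$, $\mathfrak{p}=\mathfrak{l}\oplus\mathfrak{u}$ the associated standard parabolic subalgebra and $\bar{\mathfrak{u}}=\bigoplus_{\alpha\in\Delta(\mathfrak{u})}\mathfrak{g}_{-\alpha}$ its opposite nilradical, $\Delta(\mathfrak{u})=\Delta^+\setminus\Delta^+_\Sigma$. Let $\{f_\alpha;\alpha\in\Delta(\mathfrak{u})\}$ be a basis of $\bar{\mathfrak{u}}$, and let $x_{\alpha,n}$ ($\alpha\in\Delta(\mathfrak{u}),n\in\mathbb{Z}$) be commuting variables which commute with $\widehat{\mathfrak{g}}$. Put $u(x)=\sum_{\alpha\in\Delta(\mathfrak{u})}\sum_{n\in\mathbb{Z}}x_{\alpha,n}f_{\alpha,n}$ where $f_{\alpha,n}=f_\alpha\otimes t^n$, $a^*_\alpha(z)=\sum_{n\in\mathbb{Z}}x_{\alpha,-n}z^{-n}$ and $u(z)=\sum_{\alpha\in\Delta(\mathfrak{u})}a^*_\alpha(z)f_\alpha$. Then for all $a\in\mathfrak{g}$ and $k\in\mathbb{N}$, $$(\operatorname{ad}(u(x)))^k(a(z))=(\operatorname{ad}(u(z)))^k(a(z))+(-1)^{k-1}\big((\operatorname{ad}(u(z)))^{k-1}(\partial_z u(z)),a\big)c.$$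
   Context: $(\cdot,\cdot)$ is the $\mathfrak{g}$-invariant symmetric bilinear form on $\mathfrak{g}$ normalized by $(\theta,\theta)=2$ for the maximal root $\theta$. The affine Kac-Moody algebra is $\widehat{\mathfrak{g}}=\mathfrak{g}\otimes\mathbb{C}((t))\oplus\mathbb{C}c$ with $c$ central and $[a_m,b_n]=[a,b]_{m+n}+m(a,b)\delta_{m,-n}c$, where $a_n=a\otimes t^n$. For $a\in\mathfrak{g}$, $a(z)=\sum_{n\in\mathbb{Z}}a_nz^{-n-1}$. The left side is computed in $\widehat{\mathfrak{g}}$ with coefficients polynomial in the $x$'s. On the right, $\mathfrak{g}\otimes P(z)$ (with $P(z)$ the polynomial algebra in the $a^*_\alpha(z)$) is a Lie algebra over $P(z)$, and an element $\sum_r P_r(z)b_r$ ($b_r\in\mathfrak{g}$, $P_r(z)\in P(z)$) is identified with $\sum_rP_r(z)b_r(z)$; in particular $(\operatorname{ad}u(z))^k(a(z))$ means $(\operatorname{ad}u(z))^k(a)$ with each $b\in\mathfrak{g}$ replaced by $b(z)$. The form $(\cdot,\cdot)$ is extended $P(z)$-bilinearly, and $\partial_zu(z)=\sum_\alpha\partial_za^*_\alpha(z)f_\alpha$. *)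

From mathcomp Require Import all_boot all_algebra.
From mathcomp Require Import finmap multiset complex Rstruct.
From Stdlib Require Import Reals.
Set Implicit Arguments. Unset Strict Implicit. Unset Printing Implicit Defensive.
Import GRing.Theory.
Local Open Scope ring_scope.

Definition C : fieldType := (Rdefinitions.R)[i].

Section LieData.
Variable g : vectType C.
Variable br : g -> g -> g.

Definition is_lie_bracket :=
  [/\ forall (a : C) x y z, br (a *: x + y) z = a *: br x z + br y z,
      forall (a : C) x y z, br z (a *: x + y) = a *: br z x + br z y,
      forall x, br x x = 0 &
      forall x y z, br x (br y z) + br y (br z x) + br z (br x y) = 0].

Definition simple_lie :=
  (exists x y, br x y != 0) /\
  forall I : {vspace g}, (forall x y, y \in I -> br x y \in I) ->
    I = 0%VS \/ I = fullv.

Definition inv_sym_form (form : g -> g -> C) :=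
  [/\ forall (a : C) x y z, form (a *: x + y) z = a * form x z + form y z,
      forall x y, form x y = form y x &
      forall x y z, form (br x y) z = form x (br y z)].

Definition toral (T : {vspace g}) :=
  (forall x y, x \in T -> y \in T -> br x y = 0) /\
  (forall x, x \in T -> exists2 B : seq g, basis_of fullv B &
       forall v, v \in B -> exists c : C, br x v = c *: v).

Definition cartan (h : {vspace g}) :=
  toral h /\ forall T, toral T -> (h <= T)%VS -> T = h.

Variable h : {vspace g}.

Definition hdual := 'Hom(subvs_of h, C^o).

Definition rspace (l : hdual) : {vspace g} :=
  (\bigcap_(t <- vbasis h) lker (linfun (fun x : g => br t x - (l (vsproj h t) : C) *: x)))%VS.

Definition isroot (l : hdual) : bool := (l != 0) && (rspace l != 0%VS).

Definition comb_nat (s : seq hdual) (l : hdual) :=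
  exists c : 'I_(size s) -> nat, l = \sum_(i < size s) (c i)%:R *: s`_i.

Definition is_base (Pi : seq hdual) :=
  [/\ free Pi, all isroot Pi &
      forall l, isroot l -> comb_nat Pi l \/ comb_nat Pi (- l)].

Definition pos_root (Pi : seq hdual) l := isroot l /\ comb_nat Pi l.

Definition in_Du (Pi Sig : seq hdual) l := pos_root Pi l /\ ~ comb_nat Sig l.

Definition ubar (Du : seq hdual) : {vspace g} := (\sum_(l <- Du) rspace (- l))%VS.

(* (theta, theta) = 2 for the maximal root theta, the form on h^* being
   induced by the (nondegenerate) form on h *)
Definition normalized (form : g -> g -> C) (Pi : seq hdual) :=
  exists th : hdual,
    [/\ pos_root Pi th,
        (forall l, pos_root Pi l -> ~~ isroot (th + l)) &
        exists2 t, t \in h &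
          (forall y : subvs_of h, form t (vsval y) = (th y : C)) /\
          (th (vsproj h t) : C) = 2].
End LieData.

(* Monomials in the commuting variables x_{alpha,n} (alpha in A, n in Z)    *)
(* are finite multisets over A * int.                                       *)
Definition Mon (A : finType) := multiset (A * int)%type.

Section Series.
Variables (A : finType) (g : vectType C) (br : g -> g -> g)
          (form : g -> g -> C) (f : A -> g).

(* Elements of the completed (hat g)[x][[z, z^-1]]:
   W = sum_{e, mu} z^e x^mu ( sum_N gpart e mu N (x) t^N  +  cpart e mu c ). *)
Record W := mkW { gpart : int -> Mon A -> int -> g ; cpart : int -> Mon A -> C }.

(* a(z) = sum_n a_n z^{-n-1} *)
Definition az (a : g) : W :=
  mkW (fun e mu N => if (mu == mset0) && (N == - e - 1) then a else 0)
      (fun _ _ => 0).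

(* ad(u(x)) with u(x) = sum_{alpha,n} x_{alpha,n} f_{alpha,n}, computed
   coefficientwise (each coefficient of the infinite sum is a finite sum):
   [x_{al,n} f_{al,n}, b_j] = x_{al,n} ([f_al, b]_{n+j} + n (f_al, b) delta_{n,-j} c),
   c central. *)
Definition adux (F : W) : W :=
  mkW (fun e mu N => \sum_(p <- finsupp mu)
                        br (f p.1) (gpart F e (mu `\ p)%mset (N - p.2)))
      (fun e mu => \sum_(p <- finsupp mu)
                        p.2%:~R * form (f p.1) (gpart F e (mu `\ p)%mset (- p.2))).

(* g (x) S, S = formal series in z, x : X e mu = coefficient of z^e x^mu *)
Definition GS := int -> Mon A -> g.

(* multiplication by a*_al(z) = sum_n x_{al,-n} z^{-n} = sum_m x_{al,m} z^m *)
Definition astar (al : A) (X : GS) : GS :=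
  fun e mu => \sum_(p <- finsupp mu | p.1 == al) X (e - p.2) (mu `\ p)%mset.

(* multiplication by d/dz a*_al(z) = sum_m m x_{al,m} z^{m-1} *)
Definition dastar (al : A) (X : GS) : GS :=
  fun e mu => \sum_(p <- finsupp mu | p.1 == al)
                 p.2%:~R *: X (e - p.2 + 1) (mu `\ p)%mset.

Definition constS (b : g) : GS :=
  fun e mu => if (e == 0) && (mu == mset0) then b else 0.

(* ad(u(z)) in the Lie algebra g (x) S (S-bilinear extension of the bracket),
   u(z) = sum_al a*_al(z) f_al *)
Definition aduz (X : GS) : GS :=
  fun e mu => \sum_(al : A) astar al (fun e' mu' => br (f al) (X e' mu')) e mu.

Definition duz : GS := fun e mu => \sum_(al : A) dastar al (constS (f al)) e mu.

Definition pairS (X : GS) (b : g) : int -> Mon A -> C := fun e mu => form (X e mu) b.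

(* identification  sum_r P_r b_r  |->  sum_r P_r b_r(z),  b(z) = sum_N b_N z^{-N-1} *)
Definition realize (X : GS) : int -> Mon A -> int -> g :=
  fun e mu N => X (e + N + 1) mu.

(* right-hand side of the identity; the correction term is 0 when k = 0 *)
Definition rhs (a : g) (k : nat) : W :=
  mkW (realize (iter k aduz (constS a)))
      (if k is k'.+1 then
         fun e mu => (-1) ^+ k' * pairS (iter k' aduz duz) a e mu
       else fun _ _ => 0).
End Series.

From HB Require Import structures.
From mathcomp Require Import all_boot all_algebra.
From mathcomp Require Import finmap multiset complex Rstruct.
From mathcomp Require Import zify.
From Stdlib Require Import FunctionalExtensionality.
Set Implicit Arguments. Unset Strict Implicit. Unset Printing Implicit Defensive.
Import GRing.Theory.
Local Open Scope ring_scope.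

(** The bracket with [x_(α,n) f_(α,n)] sends [b_N] to
    [x_(α,n) ([f_α, b]_(n+N) + n (f_α, b) δ_(n,-N) c)]. On the [g]-part this is
    multiplication by [a*_α(z)] followed by [ad f_α], so the [g]-part of
    [(ad u(x))^k a(z)] is [(ad u(z))^k a(z)], and the central part of the last
    step is [Σ_α ∂a*_α(z) (f_α, (ad u(z))^(k-1) a)]. Expanding [(ad u(z))^(k-1)]
    over words [β] in [A], the word [β] carries the monomial
    [a*_β1 ⋯ a*_β(k-1)], which does not change when [β] is reversed, and by
    invariance [(f_α, [f_β1, [… [f_β(k-1), a]]]) = (-1)^(k-1)
    ([f_β(k-1), [… [f_β1, f_α]]], a)]; reversing the words gives
    [(-1)^(k-1) ((ad u(z))^(k-1) ∂u(z), a)]. *)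

Lemma big_finsupp_msetB1 (K : choiceType) (V : nmodType) (mu : multiset K) p
    (P : pred K) (F : K -> V) :
  \sum_(q <- finsupp (mu `\ p)%mset | P q) F q =
  \sum_(q <- finsupp mu | P q && (q \in (mu `\ p)%mset)) F q.
Proof.
rewrite big_mkcond [RHS]big_mkcond /=.
transitivity (\sum_(q <- finsupp (mu `\ p)%mset)
   (if q \in (mu `\ p)%mset then (if P q then F q else 0) else 0)).
  by apply: eq_big_seq => q; rewrite msuppE => ->.
rewrite (big_fset_incl _ (B := finsupp mu)).
- by apply: eq_bigr => q _; case: (P q); case: (q \in _).
- by apply/fsubsetP => q; rewrite !msuppE in_msetB1 => /andP[].
- by move=> q _; rewrite msuppE => /negbTE ->.
Qed.

Lemma in_msetB1C (K : choiceType) (mu : multiset K) p q : p \in mu -> q \in mu ->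
  (q \in (mu `\ p)%mset) = (p \in (mu `\ q)%mset).
Proof.
move=> pm qm; rewrite !in_msetB1 pm qm !andbT.
by case: (eqVneq q p) => [->|].
Qed.

Lemma msetB1AC (K : choiceType) (mu : multiset K) p q :
  ((mu `\ p) `\ q)%mset = ((mu `\ q) `\ p)%mset.
Proof. by apply/msetP => x; rewrite !msetB1E subnAC. Qed.

Section Coefficients.
Variable A : finType.
Local Notation coefs V := (int -> Mon A -> V).

Lemma coefs_ext (V : Type) (X Y : coefs V) : (forall e mu, X e mu = Y e mu) -> X = Y.
Proof.
by move=> XY; apply: functional_extensionality => e;
   apply: functional_extensionality => mu.
Qed.

Definition const_coefs (V : nmodType) (b : V) : coefs V :=
  fun e mu => if (e == 0) && (mu == mset0) then b else 0.

Definition map_coefs (U V : Type) (phi : U -> V) (X : coefs U) : coefs V :=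
  fun e mu => phi (X e mu).

(* [mulx al w s] is multiplication by [\sum_m w m x_(al,m) z^(m - s)]; thus
   [astar al] is [mulx al (fun=> 1) 0] and [dastar al] is [mulx al intr 1]. *)
Definition mulx (V : lmodType C) (al : A) (w : int -> C) (s : int) (X : coefs V) :
    coefs V :=
  fun e mu => \sum_(p <- finsupp mu | p.1 == al) w p.2 *: X (e - p.2 + s) (mu `\ p)%mset.

Lemma mulxC (V : lmodType C) al1 w1 s1 al2 w2 s2 (X : coefs V) :
  mulx al1 w1 s1 (mulx al2 w2 s2 X) = mulx al2 w2 s2 (mulx al1 w1 s1 X).
Proof.
apply: coefs_ext => e mu; rewrite /mulx.
under eq_bigr do rewrite big_finsupp_msetB1 scaler_sumr.
under [RHS]eq_bigr do rewrite big_finsupp_msetB1 scaler_sumr.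
rewrite (exchange_big_dep (fun q => q.1 == al2)) /=; last by move=> i j _ /andP[].
rewrite big_seq_cond [RHS]big_seq_cond.
apply: eq_bigr => q /andP[qS qal].
rewrite big_seq_cond [RHS]big_seq_cond.
apply: eq_big => [p|p /andP[pS /andP[_ /andP[_ _]]]].
  case pS: (p \in finsupp mu) => //=; rewrite qal /=.
  by rewrite in_msetB1C // -msuppE.
rewrite !scalerA mulrC msetB1AC.
by congr (_ *: X _ _); lia.
Qed.

Lemma mulx_sum (V : lmodType C) al w s I (r : seq I) (P : pred I) (F : I -> coefs V) :
  mulx al w s (fun e mu => \sum_(i <- r | P i) F i e mu) =
  fun e mu => \sum_(i <- r | P i) mulx al w s (F i) e mu.
Proof.
apply: coefs_ext => e mu.
rewrite /mulx; under eq_bigr do rewrite scaler_sumr; exact: exchange_big.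
Qed.

Definition mulw (V : lmodType C) (t : seq A) (X : coefs V) : coefs V :=
  foldr (fun al => mulx al (fun=> 1) 0) X t.

Lemma mulw_sum (V : lmodType C) t I (r : seq I) (P : pred I) (F : I -> coefs V) :
  mulw t (fun e mu => \sum_(i <- r | P i) F i e mu) =
  fun e mu => \sum_(i <- r | P i) mulw t (F i) e mu.
Proof. by elim: t => //= al t IH; rewrite IH mulx_sum. Qed.

Lemma mulx_mulw (V : lmodType C) al w s t (X : coefs V) :
  mulx al w s (mulw t X) = mulw t (mulx al w s X).
Proof. by elim: t => //= be t IH; rewrite mulxC IH. Qed.

Lemma mulw_rev (V : lmodType C) t (X : coefs V) : mulw (rev t) X = mulw t X.
Proof.
elim: t X => //= al t IH X; rewrite rev_cons /mulw foldr_rcons.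
by rewrite -/(mulw (rev t) _) IH -mulx_mulw.
Qed.

Section LinearMap.
Variables (U V : lmodType C) (phi : U -> V).
Hypothesis phi_linear : linear phi.
HB.instance Definition _ := GRing.isLinear.Build C U V *:%R phi phi_linear.

Lemma map_coefs_const b : map_coefs phi (const_coefs b) = const_coefs (phi b).
Proof.
by apply: coefs_ext => e mu; rewrite /map_coefs /const_coefs; case: ifP; rewrite ?linear0.
Qed.

Lemma map_coefs_sum I (r : seq I) (P : pred I) (F : I -> coefs U) :
  map_coefs phi (fun e mu => \sum_(i <- r | P i) F i e mu) =
  fun e mu => \sum_(i <- r | P i) map_coefs phi (F i) e mu.
Proof. by apply: coefs_ext => e mu; rewrite /map_coefs linear_sum. Qed.

Lemma map_coefs_mulx al w s X :
  map_coefs phi (mulx al w s X) = mulx al w s (map_coefs phi X).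
Proof.
apply: coefs_ext => e mu; rewrite /map_coefs /mulx linear_sum.
by apply: eq_bigr => p _; rewrite linearZ.
Qed.

Lemma map_coefs_mulw t X : map_coefs phi (mulw t X) = mulw t (map_coefs phi X).
Proof. by elim: t => //= al t IH; rewrite map_coefs_mulx IH. Qed.
End LinearMap.

Lemma big_tuple_cons (V : nmodType) (T : finType) k (G : seq T -> V) :
  \sum_(t : k.+1.-tuple T) G t = \sum_(x : T) \sum_(t : k.-tuple T) G (x :: t).
Proof.
rewrite pair_big /= (reindex (fun p : T * k.-tuple T => cons_tuple p.1 p.2)) //=.
exists (fun t : k.+1.-tuple T => (thead t, behead_tuple t)).
  by move=> [x t] _ /=; congr pair; apply: val_inj.
by move=> t _; rewrite [RHS]tuple_eta; apply: val_inj.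
Qed.

Lemma big_tuple0 (V : nmodType) (T : finType) (G : seq T -> V) :
  \sum_(t : 0.-tuple T) G t = G [::].
Proof. by rewrite (big_pred1 [tuple]) // => t; apply/esym/eqP; exact: tuple0. Qed.

Lemma big_tuple_rev (V : nmodType) (T : finType) k (G : seq T -> V) :
  \sum_(t : k.-tuple T) G t = \sum_(t : k.-tuple T) G (rev t).
Proof.
have rev_inj : injective (@rev_tuple k T).
  by move=> t1 t2 /(congr1 val) /= /(congr1 rev); rewrite !revK => /val_inj.
by rewrite (reindex_inj rev_inj).
Qed.

Section LieSeries.
Variables (g : vectType C) (br : g -> g -> g) (form : g -> g -> C) (f : A -> g).
Hypotheses (Hlie : is_lie_bracket br) (Hform : inv_sym_form br form).

Lemma br_linear x : linear (br x).
Proof. by case: Hlie => _ H _ _ c u v; rewrite H. Qed.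

HB.instance Definition _ x := GRing.isLinear.Build C g g *:%R (br x) (br_linear x).

Lemma br_anti x y : br x y = - br y x.
Proof.
case: Hlie => brl _ brxx _.
have brDl u v w : br (u + v) w = br u w + br v w by have := brl 1 u v w; rewrite !scale1r.
move/eqP: (brxx (x + y)); rewrite brDl !linearD /= !brxx add0r addr0.
by rewrite addr_eq0 => /eqP.
Qed.

Lemma form_linear c : linear (form c : g -> C^o).
Proof. by case: Hform => H Hsym _ a u v; rewrite Hsym H !(Hsym c). Qed.

HB.instance Definition _ c :=
  GRing.isLinear.Build C g C^o *:%R (form c : g -> C^o) (form_linear c).

Lemma form_br c x y : form c (br x y) = - form (br x c) y.
Proof.
case: Hform => _ Hsym Hinv.
by rewrite -Hinv br_anti Hsym (linearN (form y : g -> C^o)) Hsym.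
Qed.

Definition ad_word (t : seq A) (b : g) : g := foldr (fun al => br (f al)) b t.

Lemma ad_word_linear t : linear (ad_word t).
Proof. by elim: t => [|al t IH] c x y //=; rewrite IH linearP. Qed.

Lemma form_ad_word t c b :
  form c (ad_word t b) = (-1) ^+ size t * form (ad_word (rev t) c) b.
Proof.
elim: t c => [|al t IH] c /=; first by rewrite mul1r.
by rewrite form_br IH rev_cons /ad_word foldr_rcons exprS mulN1r mulNr.
Qed.

Lemma aduzE X :
  aduz br f X = fun e mu => \sum_al mulx al (fun=> 1) 0 (map_coefs (br (f al)) X) e mu.
Proof.
apply: coefs_ext => e mu; apply: eq_bigr => al _; apply: eq_bigr => p _.
by rewrite scale1r addr0.
Qed.

Lemma map_iter_aduz (V : lmodType C) (phi : g -> V) k X : linear phi ->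
  map_coefs phi (iter k (aduz br f) X) =
  fun e mu => \sum_(t : k.-tuple A) mulw t (map_coefs (phi \o ad_word t) X) e mu.
Proof.
elim: k phi => [|k IH] phi phi_linear.
  by apply: coefs_ext => e mu;
     rewrite (big_tuple0 (fun t => mulw t (map_coefs (phi \o ad_word t) X) e mu)).
have phi_br_linear al : linear (phi \o br (f al)).
  by move=> c x y; rewrite /= linearP phi_linear.
apply: coefs_ext => e mu.
rewrite iterS aduzE map_coefs_sum //.
rewrite (big_tuple_cons _ (fun t => mulw t (map_coefs (phi \o ad_word t) X) e mu)).
apply: eq_bigr => al _.
rewrite map_coefs_mulx //.
by rewrite -[map_coefs _ (map_coefs _ _)]/(map_coefs (phi \o br (f al)) _) IH // mulx_sum.
Qed.

Lemma form_duz_iter_aduz a k e mu :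
  \sum_(p <- finsupp mu) p.2%:~R *
      form (f p.1) (iter k (aduz br f) (constS a) (e - p.2 + 1) (mu `\ p)%mset) =
  (-1) ^+ k * form (iter k (aduz br f) (duz f) e mu) a.
Proof.
pose intr (n : int) : C := n%:~R.
pose psi y : C^o := (-1) ^+ k * form y a.
have psi_linear : linear psi.
  by case: Hform => formDl _ _ c x y; rewrite /psi formDl mulrDr mulrCA.
have form_iter_const al : map_coefs (form (f al) : g -> C^o)
                            (iter k (aduz br f) (const_coefs a)) =
    fun e mu => \sum_(t : k.-tuple A) mulw t (const_coefs (psi (ad_word t (f al)))) e mu.
  rewrite map_iter_aduz; last exact: form_linear.
  apply: coefs_ext => e' mu'.
  rewrite (big_tuple_rev _ (fun t => mulw t
    (map_coefs ((form (f al) : g -> C^o) \o ad_word t) (const_coefs a)) e' mu')).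
  apply: eq_bigr => t _; rewrite mulw_rev.
  rewrite -[map_coefs _ _]/(map_coefs (form (f al) : g -> C^o)
                              (map_coefs (ad_word (rev t)) (const_coefs a))).
  rewrite (map_coefs_const (ad_word_linear _)) (map_coefs_const (form_linear _)).
  by rewrite form_ad_word revK size_rev size_tuple.
have psi_word_duz t : map_coefs (psi \o ad_word t) (duz f) =
    fun e mu => \sum_al mulx al intr 1 (const_coefs (psi (ad_word t (f al)))) e mu.
  have adt_linear := ad_word_linear t.
  rewrite -[LHS]/(map_coefs psi (map_coefs (ad_word t) (duz f))).
  rewrite !map_coefs_sum //; apply: coefs_ext => e' mu'; apply: eq_bigr => al _.
  by rewrite !map_coefs_mulx // !map_coefs_const.
rewrite -[RHS]/(map_coefs psi (iter k (aduz br f) (duz f)) e mu) map_iter_aduz //.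
under [RHS]eq_bigr do rewrite psi_word_duz mulw_sum /=.
rewrite exchange_big (partition_big (fun p => p.1) predT) //=.
apply: eq_bigr => al _.
transitivity (mulx al intr 1 (map_coefs (form (f al) : g -> C^o)
                                       (iter k (aduz br f) (const_coefs a))) e mu).
  by apply: eq_bigr => p /eqP <-.
by rewrite form_iter_const mulx_sum; apply: eq_bigr => t _; rewrite mulx_mulw.
Qed.

Lemma gpart_iter_adux a k :
  gpart (iter k (adux br form f) (az A a)) = realize (iter k (aduz br f) (constS a)).
Proof.
elim: k => [|k IH]; apply: functional_extensionality => e;
  apply: functional_extensionality => mu; apply: functional_extensionality => N.
  rewrite /= /realize /constS andbC.
  by have -> : (N == - e - 1) = (e + N + 1 == 0) by apply/eqP/eqP => ?; lia.
rewrite iterS /= IH (partition_big (fun p => p.1) predT) //=.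
apply: eq_bigr => al _; apply: eq_bigr => p /eqP <-.
by rewrite /realize (addrAC _ 1) addrA.
Qed.
End LieSeries.
End Coefficients.

Lemma W_ext (A : finType) (g : vectType C) (w1 w2 : W A g) :
  gpart w1 = gpart w2 -> cpart w1 = cpart w2 -> w1 = w2.
Proof. by case: w1 w2 => ? ? [? ?] /= -> ->. Qed.

Theorem mainTheorem2
  (g : vectType C) (br : g -> g -> g) (form : g -> g -> C)
  (h : {vspace g}) (Pi Sig Du : seq (hdual h))
  (A : finType) (f : A -> g)
  (Hlie : is_lie_bracket br) (Hsimple : simple_lie br)
  (Hform : inv_sym_form br form) (Hnorm : normalized br form Pi)
  (Hcartan : cartan br h) (HPi : is_base br Pi) (HSig : {subset Sig <= Pi})
  (HDu : forall l, l \in Du <-> in_Du br Pi Sig l)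
  (Hf : basis_of (ubar br Du) [seq f al | al <- enum A])
  (a : g) (k : nat) :
  iter k (adux br form f) (az A a) = rhs br form f a k.
Proof.
apply: W_ext; first exact: gpart_iter_adux.
case: k => [//|k]; apply: coefs_ext => e mu.
rewrite iterS /= gpart_iter_adux.
exact: form_duz_iter_aduz.
Qed.
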